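(* Let $w=w_1\cdots w_n$ be a word of length $n\ge 2$ such that each letter occurs at most $n/4$ times in $w$. Then $f(w)=n+2$. Moreover, for infinitely many $n\ge 2$ there exists a word $w$ of length $n$ in which every letter occurs at most $1+n/4$ times and such that $f(w)>n+2$.
   Context: A word of length $n$ is a sequence $w=w_1w_2\cdots w_n$ of letters (symbols). Let $[n]=\{1,\dots,n\}$. An $n$-grid is a function $G:[n]^2\to\Sigma$, where $\Sigma$ is an arbitrary set of letters. The $i$th row of $G$ contains $w$ if $G(i,j)=w_j$ for all $1\le j\le n$, or $G(i,j)=w_{n-j+1}$ for all $1\le j\le n$. The $j$th column contains $w$ if $G(i,j)=w_i$ for all $i$, or $G(i,j)=w_{n-i+1}$ for all $i$. The main diagonal contains $w$ if $G(i,i)=w_i$ for all $i$ or $G(i,i)=w_{n-i+1}$ for all $i$; the anti-diagonal contains $w$ if $G(i,n-i+1)=w_i$ for all $i$ or $G(i,n-i+1)=w_{n-i+1}$ for all $i$. Let $f(w,G)$ be the number of the $2n+2$ lines ($n$ rows, $n$ columns, $2$ diagonals) of $G$ that contain $w$, and $f(w)=\max_G f(w,G)$ over all $n$-grids $G$. *)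

From mathcomp Require Import all_boot all_order all_algebra.
Set Implicit Arguments. Unset Strict Implicit. Unset Printing Implicit Defensive.

(* A word of length n over the alphabet T is an n-tuple; an n-grid is an
   n x n matrix with entries in T (indices 0..n-1 instead of 1..n). *)

Section Grid.
Variables (T : finType) (n : nat) (w : n.-tuple T) (G : 'M[T]_n).

Definition row_contains (i : 'I_n) : bool :=
  [forall j, G i j == tnth w j] || [forall j, G i j == tnth w (rev_ord j)].

Definition col_contains (j : 'I_n) : bool :=
  [forall i, G i j == tnth w i] || [forall i, G i j == tnth w (rev_ord i)].

Definition diag_contains : bool :=
  [forall i, G i i == tnth w i] || [forall i, G i i == tnth w (rev_ord i)].

Definition antidiag_contains : bool :=
  [forall i, G i (rev_ord i) == tnth w i] ||
  [forall i, G i (rev_ord i) == tnth w (rev_ord i)].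

Definition fwG : nat :=
  #|[set i | row_contains i]| + #|[set j | col_contains j]|
  + diag_contains + antidiag_contains.
End Grid.

Definition fw (T : finType) (n : nat) (w : n.-tuple T) : nat :=
  \max_(G : 'M[T]_n) fwG w G.

From mathcomp Require Import all_boot all_order all_algebra zify.

Set Implicit Arguments.
Unset Strict Implicit.
Unset Printing Implicit Defensive.

(* If column j of a grid contains w, then each row containing w has one of the
   letters w_j, w_(n+1-j) in column j, and the column identifies that row, up to
   reversal, with a position of w carrying one of these letters.  So at most
   n/4 + n/4 rows contain w, and by transposition at most n/2 columns do: either
   no row or no column contains w, or at most n lines do, whence f(w) <= n + 2,
   attained by the grid all of whose rows are w.
   Conversely, if w begins with m equal letters and ends with m equal letters,
   take the first m rows equal to w, the last m rows equal to the reversal of w,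
   and fill the other rows so that columns 1..m read w and columns n-m+1..n read
   w backwards; then 2m rows and 2m columns contain w.  For the word
   0^(k+2) 2^k 3^k 1^(k+2) of length 4k+4 this gives 4k+8 lines. *)

Lemma card_ord_pred (n : nat) (P : pred nat) :
  #|[set i : 'I_n | P i]| = count P (iota 0 n).
Proof.
by rewrite cardsE cardE /enum_mem size_filter -enumT -val_enum_ord count_map.
Qed.

Lemma card_border (n m : nat) :
  2 * m <= n -> #|[set i : 'I_n | (i < m) || (n - m <= i)]| = 2 * m.
Proof.
move=> le2mn; rewrite (@card_ord_pred n (fun i => (i < m) || (n - m <= i))).
rewrite -[n in iota 0 n](_ : m + (n - 2 * m) + m = n); last by lia.
rewrite !iotaD !count_cat add0n.
rewrite (@eq_in_count _ _ predT (iota 0 m)); last first.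
  by move=> i; rewrite mem_iota => /andP[_ ->].
rewrite (@eq_in_count _ _ pred0 (iota m _)); last first.
  by move=> i; rewrite mem_iota => /andP[? ?]; apply/negbTE; lia.
rewrite (@eq_in_count _ _ predT (iota (m + _) m)); last first.
  by move=> i; rewrite mem_iota => /andP[? _]; apply/orP; right; lia.
by rewrite !count_predT count_pred0 !size_iota; lia.
Qed.

Section Grid.
Variables (T : finType) (n : nat) (w : n.-tuple T).

Lemma card_tnth_eq (a : T) : #|[set i | tnth w i == a]| = count_mem a w.
Proof.
rewrite -[in RHS](map_tnth_enum w) count_map enumT.
by rewrite cardsE cardE /enum_mem size_filter.
Qed.

Lemma row_contains_tr (G : 'M[T]_n) i :
  row_contains w G^T i = col_contains w G i.
Proof. by congr orb; apply: eq_forallb => j; rewrite mxE. Qed.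

Lemma col_contains_tr (G : 'M[T]_n) j :
  col_contains w G^T j = row_contains w G j.
Proof. by congr orb; apply: eq_forallb => i; rewrite mxE. Qed.

Lemma card_rows_le_count (G : 'M[T]_n) j : col_contains w G j ->
  #|[set i | row_contains w G i]|
    <= count_mem (tnth w j) w + count_mem (tnth w (rev_ord j)) w.
Proof.
set a := tnth w j; set b := tnth w (rev_ord j).
set P := [set i | tnth w i == a] :|: [set i | tnth w i == b].
have card_P : #|P| <= count_mem a w + count_mem b w.
  by rewrite -!card_tnth_eq leq_card_setU.
have row_entry i : row_contains w G i -> (G i j == a) || (G i j == b).
  by case/orP=> /forallP/(_ j)/eqP ->; rewrite eqxx ?orbT.
case/orP=> /forallP col_j.
- apply: leq_trans card_P; apply/subset_leq_card/subsetP => i.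
  by rewrite !inE => /row_entry; rewrite (eqP (col_j i)).
- apply: leq_trans card_P; rewrite -(card_preimset P (@rev_ord_inj n)).
  apply/subset_leq_card/subsetP => i.
  by rewrite !inE => /row_entry; rewrite (eqP (col_j i)).
Qed.

Lemma fw_ge_rows : n + 2 <= fw w.
Proof.
pose G := (\matrix_(i < n, j < n) tnth w j)%R.
apply: leq_trans (leq_bigmax G); rewrite /fwG.
have -> : [set i | row_contains w G i] = setT.
  by apply/setP => i; rewrite !inE /row_contains; apply/orP; left;
     apply/forallP => j; rewrite mxE.
have -> : diag_contains w G by apply/orP; left; apply/forallP => i; rewrite mxE.
have -> : antidiag_contains w G.
  by apply/orP; right; apply/forallP => i; rewrite mxE.
by rewrite cardsT card_ord /=; lia.
Qed.

Lemma tnth_take_nseq m a (i : 'I_n) :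
  take m w = nseq m a -> i < m -> tnth w i = a.
Proof.
move=> prefix lt_im; rewrite (tnth_nth a) -(nth_take a lt_im) prefix.
by rewrite nth_nseq if_same.
Qed.

Lemma tnth_drop_nseq m b (i : 'I_n) :
  drop (n - m) w = nseq m b -> n - m <= i -> tnth w i = b.
Proof.
move=> suffix le_i; rewrite (tnth_nth b) -(subnKC le_i) -nth_drop suffix.
by rewrite nth_nseq if_same.
Qed.

Definition border_grid (m : nat) : 'M[T]_n := \matrix_(i < n, j < n)
  if (i < m)%N then tnth w j else if (n - m <= i)%N then tnth w (rev_ord j)
  else if (j < m)%N then tnth w i else tnth w (rev_ord i).

Lemma fw_ge_border m a b : 2 * m <= n ->
  take m w = nseq m a -> drop (n - m) w = nseq m b -> 4 * m <= fw w.
Proof.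
move=> le2mn prefix suffix; set G := border_grid m.
have wa (i : 'I_n) : i < m -> tnth w i = a by apply: tnth_take_nseq.
have wb (i : 'I_n) : n - m <= i -> tnth w i = b by apply: tnth_drop_nseq.
set S := [set i : 'I_n | (i < m) || (n - m <= i)].
have rowsS : S \subset [set i | row_contains w G i].
  apply/subsetP => i; rewrite !inE => /orP[lt_im | le_i]; apply/orP.
    by left; apply/forallP => j; rewrite mxE lt_im.
  right; apply/forallP => j; rewrite mxE le_i ifF //; lia.
have colsS : S \subset [set j | col_contains w G j].
  apply/subsetP => j; rewrite !inE => /orP[lt_jm | le_j]; apply/orP.
    left; apply/forallP => i; rewrite mxE lt_jm.
    case: ifP => [lt_im | _]; first by rewrite !wa.
    by case: ifP => // le_i; rewrite !wb //=; lia.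
  right; apply/forallP => i; rewrite mxE (_ : (j < m) = false); last by lia.
  case: ifP => [lt_im | _]; first by rewrite !wb //=; lia.
  by case: ifP => // le_i; rewrite !wa //=; have := ltn_ord i; lia.
rewrite (_ : 4 * m = #|S| + #|S|); last by rewrite card_border //; lia.
apply: leq_trans (leq_bigmax G); rewrite /fwG -addnA.
apply: leq_trans (leq_addr _ _).
exact: leq_add (subset_leq_card rowsS) (subset_leq_card colsS).
Qed.

Hypothesis rare_letters : forall a : T, 4 * count_mem a w <= n.

Lemma card_rows_le_half (G : 'M[T]_n) j : col_contains w G j ->
  2 * #|[set i | row_contains w G i]| <= n.
Proof.
move=> /card_rows_le_count.
have := rare_letters (tnth w j); have := rare_letters (tnth w (rev_ord j)).
lia.
Qed.

Lemma fwG_le (G : 'M[T]_n) : fwG w G <= n + 2.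
Proof.
rewrite /fwG; set R := [set i | row_contains w G i].
set C := [set j | col_contains w G j].
have := leq_b1 (diag_contains w G); have := leq_b1 (antidiag_contains w G).
have : #|R| <= n by rewrite -[n in _ <= n]card_ord max_card.
have : #|C| <= n by rewrite -[n in _ <= n]card_ord max_card.
have [-> | [j]] := set_0Vmem C; first by rewrite cards0; lia.
rewrite inE => /card_rows_le_half; rewrite -/R.
have [-> | [i]] := set_0Vmem R; first by rewrite cards0; lia.
rewrite inE -col_contains_tr => /card_rows_le_half.
have -> : [set i | row_contains w G^T i] = C.
  by apply/setP => k; rewrite !inE row_contains_tr.
lia.
Qed.

End Grid.

Definition border_seq (k : nat) : seq 'I_4 :=
  nseq k.+2 0%R ++ nseq k 2%R ++ nseq k 3%R ++ nseq k.+2 1%R.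

Lemma size_border_seq k : size (border_seq k) == 4 * k.+1.
Proof. by rewrite !size_cat !size_nseq; lia. Qed.

Definition border_word (k : nat) : (4 * k.+1).-tuple 'I_4 :=
  Tuple (size_border_seq k).

Lemma count_mem_border_word k a : count_mem a (border_word k) <= k.+2.
Proof.
by case: a => [[|[|[|[|//]]]] ?]; rewrite !count_cat !count_nseq /=; lia.
Qed.

Lemma take_border_word k : take k.+2 (border_word k) = nseq k.+2 0%R.
Proof. by rewrite take_size_cat // size_nseq. Qed.

Lemma drop_border_word k :
  drop (4 * k.+1 - k.+2) (border_word k) = nseq k.+2 1%R.
Proof.
by rewrite /= /border_seq !catA drop_size_cat // !size_cat !size_nseq; lia.
Qed.

Theorem theorem1 :
  (forall (T : finType) (n : nat) (w : n.-tuple T),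
     2 <= n -> (forall a : T, 4 * count_mem a w <= n) -> fw w = n + 2)
  /\
  (forall N : nat, exists n : nat, N <= n /\ 2 <= n /\
     exists (T : finType) (w : n.-tuple T),
       (forall a : T, 4 * count_mem a w <= 4 + n) /\ n + 2 < fw w).
Proof.
split.
  move=> T n w _ rare; apply/eqP; rewrite eqn_leq fw_ge_rows andbT.
  by apply/bigmax_leqP => G _; apply: fwG_le.
move=> N; exists (4 * N.+1); split; first lia; split; first lia.
exists 'I_4, (border_word N); split.
  move=> a; apply: leq_trans (leq_mul (leqnn 4) (count_mem_border_word N a)) _.
  lia.
apply: leq_trans _ (fw_ge_border _ (take_border_word N) (drop_border_word N)).
all: lia.
Qed.
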